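(* Let $q = 2^\ell$ with $\ell \geq 1$, and let $\alpha,\beta \in \mathbb{F}_{q^2}$ be such that the line $\{(\alpha t+\beta, t)\}$ is not tangent to the Hermitian curve $x^q+x=y^{q+1}$. Let $\gamma = \beta+\beta^q$, let $\sigma_0,\dots,\sigma_q$ be the roots of $p(t) = t^{q+1} + \alpha^q t^q + \alpha t + \gamma$, and $P_k = \sum_{i=0}^q \sigma_i^k$. Let $\Gamma$ be the $q\times q$ matrix whose entry in row $i$ and column $j$ (indices $0 \le i,j \le q-1$) is $P_{jq+i}$. Then $$\Gamma = \begin{pmatrix} 1 & \alpha^{2^{\ell-1}} \\ \alpha^{2^{\ell-1}q} & \gamma^{2^{\ell-1}}\end{pmatrix} \otimes \begin{pmatrix} 1 & \alpha^{2^{\ell-2}} \\ \alpha^{2^{\ell-2}q} & \gamma^{2^{\ell-2}}\end{pmatrix}\otimes \cdots \otimes \begin{pmatrix} 1 & \alpha^{2} \\ \alpha^{2q} & \gamma^{2}\end{pmatrix} \otimes \begin{pmatrix} 1 & \alpha \\ \alpha^{q} & \gamma\end{pmatrix},$$ where $\otimes$ denotes the Kronecker product.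
   Context: For an $r\times s$ matrix $A=[a_{ij}]$ and an $m_1 \times m_2$ matrix $B$, the Kronecker product $A\otimes B$ is the $rm_1 \times s m_2$ block matrix whose $(i,j)$ block is $a_{ij}B$. *)

From HB Require Import structures.
From mathcomp Require Import all_boot all_order all_algebra.
Set Implicit Arguments. Unset Strict Implicit. Unset Printing Implicit Defensive.
Import GRing.Theory.
Local Open Scope ring_scope.

Definition kron {R : pzRingType} {m1 n1 m2 n2 : nat}
  (A : 'M[R]_(m1, n1)) (B : 'M[R]_(m2, n2)) :
  'M[R]_(\sum_(i < m1) m2, \sum_(j < n1) n2) :=
  @mxblock R m1 n1 (fun _ => m2) (fun _ => n2) (fun i j => A i j *: B).

Lemma sum2_exp2 (k : nat) : (\sum_(i < 2) 2 ^ k)%N = (2 ^ k.+1)%N.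
Proof. by rewrite big_ord_recr big_ord_recr big_ord0 /= add0n expnS mul2n addnn. Qed.

Definition kfactor {R : pzRingType} (q : nat) (a g : R) (k : nat) : 'M[R]_2 :=
  \matrix_(i < 2, j < 2)
    (if (i == 0 :> nat) && (j == 0 :> nat) then 1
     else if (i == 0 :> nat) then a ^+ (2 ^ k)
     else if (j == 0 :> nat) then a ^+ (2 ^ k * q)
     else g ^+ (2 ^ k)).

Fixpoint kchain {R : pzRingType} (q : nat) (a g : R) (l : nat) : 'M[R]_(2 ^ l) :=
  match l with
  | 0 => 1%:M
  | k.+1 => castmx (sum2_exp2 k, sum2_exp2 k) (kron (kfactor q a g k) (kchain q a g k))
  end.

Definition herm_F {L : pzRingType} (q : nat) (x y : L) : L := x ^+ q + x - y ^+ q.+1.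
Definition herm_Fx {L : pzRingType} (q : nat) (x y : L) : L := q%:R * x ^+ q.-1 + 1.
Definition herm_Fy {L : pzRingType} (q : nat) (x y : L) : L := - (q.+1)%:R * y ^+ q.

(* The line {(a t + b, t)} is tangent to the Hermitian curve at a point
   (over L): some point of the line lies on the curve and the direction
   vector (a,1) of the line is annihilated by the gradient of F there. *)
Definition line_tangent_herm {L : pzRingType} (q : nat) (a b : L) : Prop :=
  exists t : L, herm_F q (a * t + b) t = 0 /\
    a * herm_Fx q (a * t + b) t + herm_Fy q (a * t + b) t = 0.

From HB Require Import structures.
From mathcomp Require Import all_boot all_order all_algebra.
From mathcomp Require Import finfield.
From mathcomp Require Import zify ring.
Set Implicit Arguments. Unset Strict Implicit. Unset Printing Implicit Defensive.
Import GRing.Theory.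
Local Open Scope ring_scope.

(* Put q = 2^l and a = alpha^q, and work in characteristic 2.  As a^q = alpha,
   the substitution t = y + a turns p(t) into y^(q+1) + c with c = a alpha + gamma,
   so the shifted roots y = sigma + a are the roots of X^(q+1) - c.  Their power
   sums of exponent 0 < e < q + 1 vanish, hence so does the power sum of exponent
   u + q v for u <> v < q, as u + q v = u - v modulo q + 1.
   Next sigma^(jq+i) = (y + a)^i (y^q + alpha)^j.  Writing i and j in binary and
   using the Frobenius map, the m-th pair of bits (i_m, j_m) contributes the factor
   (y^(2^m) + a^(2^m))^i_m (y^(q 2^m) + alpha^(2^m))^j_m, which is the (i_m, j_m)
   entry of the m-th Kronecker factor plus multiples of y^(2^m) and y^(q 2^m);
   for i_m = j_m = 1 the constant is c^(2^m) + (a alpha)^(2^m) = gamma^(2^m).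
   Multiplying out, the constant term is the entry of the Kronecker product and
   all other exponents are of the form u + q v with u <> v < q, so summing over
   the q + 1 roots leaves (q + 1) times that entry, i.e. the entry itself. *)

Lemma exprD_pow2_pchar2 (R : comNzRingType) (x y : R) k : 2 \in [pchar R] ->
  (x + y) ^+ (2 ^ k) = x ^+ (2 ^ k) + y ^+ (2 ^ k).
Proof. by move=> pcharR2; apply: exprDn_pchar; rewrite pnatX pnatE ?pcharR2. Qed.

Lemma deriv_prod_XsubC (R : comNzRingType) (s : seq R) :
  (\prod_(x <- s) ('X - x%:P))^`() = \sum_(x <- s) \prod_(z <- rem x s) ('X - z%:P).
Proof.
elim: s => [|a s IHs]; first by rewrite !big_nil derivC.
rewrite big_cons derivM derivXsubC mul1r IHs big_cons /= eqxx mulr_sumr.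
congr (_ + _); rewrite !big_seq; apply: eq_bigr => x xs /=.
case: eqP => [->|_]; last by rewrite big_cons.
by rewrite [in RHS](perm_big _ (perm_to_rem xs)) big_cons.
Qed.

Lemma prod_XsubC_rem (R : comNzRingType) (s : seq R) x : x \in s ->
  \prod_(y <- s) ('X - y%:P) = ('X - x%:P) * \prod_(y <- rem x s) ('X - y%:P).
Proof. by move=> xs; rewrite (perm_big _ (perm_to_rem xs)) big_cons. Qed.

Section RootsOfXnsubC.
Variables (R : idomainType) (n : nat) (c : R) (ys : seq R).
Hypothesis prod_ys : \prod_(y <- ys) ('X - y%:P) = 'X^n - c%:P.

Lemma root_XnsubC y : y \in ys -> y ^+ n = c.
Proof.
move=> /prod_XsubC_rem /(congr1 (horner^~ y)).
by rewrite prod_ys hornerM !hornerE subrr mul0r => /eqP; rewrite subr_eq0 => /eqP.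
Qed.

Lemma prod_rem_XnsubC y : y \in ys ->
  \prod_(z <- rem y ys) ('X - z%:P) = \sum_(i < n) 'X^(n.-1 - i) * (y ^+ i)%:P.
Proof.
move=> yys; apply: (@mulfI _ ('X - y%:P)); first by rewrite polyXsubC_eq0.
rewrite -prod_XsubC_rem // prod_ys -(root_XnsubC yys) rmorphXn subrXX.
by congr (_ * _); apply: eq_bigr => i _; rewrite rmorphXn.
Qed.

Lemma psum_XnsubC_eq0 e : (0 < e < n)%N -> \sum_(y <- ys) y ^+ e = 0.
Proof.
move=> /andP[e_gt0 e_lt_n].
have := congr1 (fun p => p^`()`_(n.-1 - e)) prod_ys => /=.
rewrite deriv_prod_XsubC derivB derivC subr0 derivXn coefMn coefXn.
rewrite (_ : (n.-1 - e == n.-1)%N = false) ?mul0rn; last by apply/eqP; lia.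
rewrite coef_sum => psum_coef; apply: etrans _ psum_coef; apply: eq_big_seq => y yys.
rewrite prod_rem_XnsubC // coef_sum (bigD1 (Ordinal e_lt_n)) //= big1 ?addr0.
  by rewrite coefMC coefXn eqxx mul1r.
move=> i /eqP i_neq_e; rewrite coefMC coefXn (_ : (_ == _) = false) ?mul0r //.
by apply/eqP => h; apply: i_neq_e; apply: val_inj => /=; have := ltn_ord i; lia.
Qed.

End RootsOfXnsubC.

Section MixedSupport.
Variables (R : comNzRingType) (q : nat).

Definition mixed_exponent (M k : nat) : Prop :=
  exists u v, [/\ (u < M)%N, (v < M)%N, u != v & k = (u + q * v)%N].

Definition mixed_poly (M : nat) (p : {poly R}) : Prop :=
  forall k, p`_k != 0 -> mixed_exponent M k.

Lemma mixed_poly0 M : mixed_poly M 0.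
Proof. by move=> k; rewrite coef0 eqxx. Qed.

Lemma mixed_polyD M p r : mixed_poly M p -> mixed_poly M r -> mixed_poly M (p + r).
Proof.
move=> mp mr k; rewrite coefD.
by have [->|/mp //] := eqVneq p`_k 0; rewrite add0r; apply: mr.
Qed.

Lemma mixed_polyZ M a p : mixed_poly M p -> mixed_poly M (a *: p).
Proof.
move=> mp k; rewrite coefZ.
by have [->|/mp //] := eqVneq p`_k 0; rewrite mulr0 eqxx.
Qed.

Lemma mixed_poly_widen M N p : (M <= N)%N -> mixed_poly M p -> mixed_poly N p.
Proof.
move=> leMN mp k /mp[u [v [ltuM ltvM neq_uv ->]]].
by exists u, v; split; rewrite // (leq_trans _ leMN).
Qed.

Lemma mixed_polyXn M : (0 < M)%N -> mixed_poly (2 * M) 'X^M.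
Proof.
move=> M_gt0 k; rewrite coefXn; have [->|] := eqVneq k M; last by rewrite eqxx.
by move=> _; exists M, 0%N; split; rewrite -?lt0n //; lia.
Qed.

Lemma mixed_polyXqn M : (0 < M)%N -> mixed_poly (2 * M) 'X^(q * M).
Proof.
move=> M_gt0 k; rewrite coefXn; have [->|] := eqVneq k (q * M)%N; last by rewrite eqxx.
by move=> _; exists 0%N, M; split; rewrite 1?eq_sym -?lt0n //; lia.
Qed.

Lemma mixed_polyXnM M p : mixed_poly M p -> mixed_poly (2 * M) ('X^M * p).
Proof.
move=> mp k; rewrite coefXnM; case: ltnP => [_|leMk]; first by rewrite eqxx.
move=> /mp[u [v [ltuM ltvM neq_uv kE]]].
by exists (u + M)%N, v; split; [lia|lia|apply/eqP; lia|lia].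
Qed.

Lemma mixed_polyXqnM M p : mixed_poly M p -> mixed_poly (2 * M) ('X^(q * M) * p).
Proof.
move=> mp k; rewrite coefXnM; case: ltnP => [_|leqMk]; first by rewrite eqxx.
move=> /mp[u [v [ltuM ltvM neq_uv kE]]].
by exists u, (v + M)%N; split; [lia|lia|apply/eqP; lia|lia].
Qed.

Lemma mixed_poly_step M (k t v1 v2 : R) P : (0 < M)%N ->
  mixed_poly M (P - t%:P) ->
  mixed_poly (2 * M) ((k%:P + v1 *: 'X^M + v2 *: 'X^(q * M)) * P - (k * t)%:P).
Proof.
move=> M_gt0; set p := P - t%:P => mp.
have -> : (k%:P + v1 *: 'X^M + v2 *: 'X^(q * M)) * P - (k * t)%:P =
    k *: p + t *: (v1 *: 'X^M + v2 *: 'X^(q * M))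
    + v1 *: ('X^M * p) + v2 *: ('X^(q * M) * p).
  by rewrite /p -!mul_polyC polyCM; ring.
apply: mixed_polyD; [apply: mixed_polyD; [apply: mixed_polyD|]|].
- by apply: (mixed_poly_widen (M := M)); [lia | exact: mixed_polyZ].
- by apply/mixed_polyZ/mixed_polyD; apply: mixed_polyZ;
    [apply: mixed_polyXn | apply: mixed_polyXqn].
- exact/mixed_polyZ/mixed_polyXnM.
- exact/mixed_polyZ/mixed_polyXqnM.
Qed.

End MixedSupport.

Section PowerSumsOverMixedSupport.
Variables (R : idomainType) (q : nat) (c : R) (ys : seq R).
Hypothesis prod_ys : \prod_(y <- ys) ('X - y%:P) = 'X^(q.+1) - c%:P.

Lemma psum_mixed_exponent k : mixed_exponent q q k -> \sum_(y <- ys) y ^+ k = 0.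
Proof.
move=> [u [v [ltuq ltvq neq_uv ->]]].
(* u + q v = u - v modulo q + 1 *)
have [t [r [r_gt0 ltrq ->]]] : exists t r,
    [/\ (0 < r)%N, (r < q.+1)%N & (u + q * v = q.+1 * t + r)%N].
  case: (ltngtP v u) => [ltvu|ltuv|eq_vu]; last by rewrite eq_vu eqxx in neq_uv.
  - by exists v, (u - v)%N; split; lia.
  - by exists v.-1, (q.+1 + u - v)%N; split; nia.
under eq_big_seq => y yys do rewrite exprD exprM (root_XnsubC prod_ys yys).
by rewrite -mulr_sumr (psum_XnsubC_eq0 prod_ys) ?r_gt0 ?mulr0.
Qed.

Lemma psum_const_plus_mixed t P : mixed_poly q q (P - t%:P) ->
  \sum_(y <- ys) P.[y] = t *+ q.+1.
Proof.
move=> mixedP.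
have size_ys : size ys = q.+1.
  by apply: succn_inj; rewrite -(size_prod_XsubC ys id) prod_ys size_XnsubC.
have PE y : P.[y] = t + (P - t%:P).[y] by rewrite hornerD hornerN hornerC addrC subrK.
under eq_bigr => y _ do rewrite PE horner_coef.
rewrite big_split big_const_seq count_predT size_ys iter_addr_0 /= exchange_big /=.
rewrite big1 ?addr0 // => k _; rewrite -mulr_sumr.
by have [->|/mixedP/psum_mixed_exponent->] := eqVneq (P - t%:P)`_k 0; rewrite ?mul0r ?mulr0.
Qed.

End PowerSumsOverMixedSupport.

Definition kfactor_coef {R : pzRingType} (q : nat) (a g : R) (k i j : nat) : R :=
  if (i == 0%N) && (j == 0%N) then 1
  else if i == 0%N then a ^+ (2 ^ k)
  else if j == 0%N then a ^+ (2 ^ k * q)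
  else g ^+ (2 ^ k).

Fixpoint kchain_coef {R : pzRingType} (q : nat) (a g : R) (m i j : nat) : R :=
  if m is k.+1 then
    kfactor_coef q a g k (i %/ 2 ^ k) (j %/ 2 ^ k) *
    kchain_coef q a g k (i %% 2 ^ k) (j %% 2 ^ k)
  else 1.

Lemma sum_ord2_lt (m : nat) (s : 'I_2) :
  (\sum_(k < 2 | (k < s)%N) 2 ^ m)%N = (s * 2 ^ m)%N.
Proof.
by case: s => [[|[|//]] ?]; rewrite big_mkcond !big_ord_recr big_ord0 /=; lia.
Qed.

Lemma kchainE (R : pzRingType) q (a g : R) m (i j : 'I_(2 ^ m)) :
  kchain q a g m i j = kchain_coef q a g m i j.
Proof.
elim: m i j => [|m IHm] i j; first by rewrite /= mxE; case: i j => [[|//] ?] [[|//] ?].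
rewrite /= castmxE /kron !mxE IHm.
set i' := cast_ord _ i; set j' := cast_ord _ j.
have := tagnat.rect i'; have := tagnat.rect j'; rewrite !sum_ord2_lt.
have := ltn_ord (tagnat.sig2 i'); have := ltn_ord (tagnat.sig2 j').
rewrite /i' /j' /= => ltj lti -> ->.
by rewrite !divnMDl ?expn_gt0 // !divn_small // !addn0 !modnMDl !modn_small.
Qed.

Lemma rmorph_kchain_coef (R S : nzRingType) (f : {rmorphism R -> S}) q a g m i j :
  f (kchain_coef q a g m i j) = kchain_coef q (f a) (f g) m i j.
Proof.
elim: m i j => [|m IHm] i j /=; first exact: rmorph1.
rewrite rmorphM IHm /kfactor_coef.
by case: ifP => _; [rewrite rmorph1 | case: ifP => _; [|case: ifP => _]; rewrite rmorphXn].
Qed.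

Section ShiftedPowerExpansion.
Variable R : comNzRingType.
Hypothesis pcharR2 : 2 \in [pchar R].
Variables (q : nat) (b g : R).
Let a := b ^+ q.
Let c := a * b + g.

Lemma kfactor_coef_expansion m i j : (i < 2)%N -> (j < 2)%N ->
  exists v1 v2, forall y, y ^+ q.+1 = c ->
   (y ^+ (2 ^ m) + a ^+ (2 ^ m)) ^+ i * (y ^+ (q * 2 ^ m) + b ^+ (2 ^ m)) ^+ j
   = kfactor_coef q b g m i j + v1 * y ^+ (2 ^ m) + v2 * y ^+ (q * 2 ^ m).
Proof.
rewrite /kfactor_coef; case: i => [|[|//]] _; case: j => [|[|//]] _ /=.
- by exists 0, 0 => y _; rewrite !mul0r !addr0 mulr1.
- by exists 0, 1 => y _; rewrite mul0r addr0 mul1r mul1r addrC.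
- by exists 1, 0 => y _; rewrite mul0r addr0 mul1r mulr1 addrC /a -exprM mulnC.
exists (b ^+ (2 ^ m)), (a ^+ (2 ^ m)) => y yc.
have yqmE : y ^+ (2 ^ m) * y ^+ (q * 2 ^ m) = c ^+ (2 ^ m).
  by rewrite -exprD -yc -exprM; congr (_ ^+ _); lia.
have gmE : c ^+ (2 ^ m) + (a * b) ^+ (2 ^ m) = g ^+ (2 ^ m).
  by rewrite -exprD_pow2_pchar2 // /c addrAC addrr_pchar2 // add0r.
by rewrite -gmE -yqmE exprMn; ring.
Qed.

Lemma shifted_power_expansion m i j : (i < 2 ^ m)%N -> (j < 2 ^ m)%N ->
  exists P, mixed_poly q (2 ^ m) (P - (kchain_coef q b g m i j)%:P) /\
    forall y, y ^+ q.+1 = c -> (y + a) ^+ i * (y ^+ q + b) ^+ j = P.[y].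
Proof.
elim: m i j => [|m IHm] i j.
  rewrite expn0 !ltnS !leqn0 => /eqP-> /eqP->.
  exists 1; split=> [|y _]; first by rewrite subrr; apply: mixed_poly0.
  by rewrite !expr0 hornerC mulr1.
move=> lti ltj; have pow_gt0 : (0 < 2 ^ m)%N by rewrite expn_gt0.
have [P [mixedP evalP]] := IHm _ _ (ltn_pmod i pow_gt0) (ltn_pmod j pow_gt0).
have top_bit k : (k < 2 ^ m.+1)%N -> (k %/ 2 ^ m < 2)%N.
  by move=> ?; rewrite ltn_divLR // -expnS.
have [v1 [v2 expandK]] := kfactor_coef_expansion m (top_bit _ lti) (top_bit _ ltj).
set kf := kfactor_coef q b g m (i %/ 2 ^ m) (j %/ 2 ^ m).
exists ((kf%:P + v1 *: 'X^(2 ^ m) + v2 *: 'X^(q * 2 ^ m)) * P); split.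
  by rewrite expnS /=; apply: mixed_poly_step.
move=> y yc; rewrite {1}(divn_eq i (2 ^ m)) {1}(divn_eq j (2 ^ m)) !exprD.
rewrite ![(_ %/ _ * _)%N]mulnC !exprM !exprD_pow2_pchar2 // -(exprM y q) mulrACA.
by rewrite expandK // evalP // -!exprM !hornerE.
Qed.

End ShiftedPowerExpansion.

Definition herm_line_poly {R : nzRingType} (q : nat) (al ga : R) : {poly R} :=
  'X ^+ q.+1 + (al ^+ q)%:P * 'X ^+ q + al%:P * 'X + ga%:P.

Lemma map_herm_line_poly (R S : nzRingType) (f : {rmorphism R -> S}) q al ga :
  map_poly f (herm_line_poly q al ga) = herm_line_poly q (f al) (f ga).
Proof. by rewrite !rmorphD !rmorphM /= !map_polyXn !map_polyC map_polyX /= rmorphXn. Qed.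

Lemma herm_line_poly_shift (R : comNzRingType) k (al ga : R) :
  2 \in [pchar R] -> (al ^+ (2 ^ k)) ^+ (2 ^ k) = al ->
  herm_line_poly (2 ^ k) al ga \Po ('X - (al ^+ (2 ^ k))%:P)
  = 'X^((2 ^ k).+1) - (al ^+ (2 ^ k) * al + ga)%:P.
Proof.
set q := (2 ^ k)%N; set a := al ^+ q => pcharR2 aqE.
have pcharP2 : 2 \in [pchar {poly R}] by rewrite pchar_poly.
rewrite !(oppr_pchar2 pcharP2) /herm_line_poly -/a !comp_polyD !comp_polyM !comp_polyC.
rewrite !rmorphXn /= comp_polyX -!(rmorphXn polyC) -/a exprS exprD_pow2_pchar2 //.
rewrite -(rmorphXn polyC) aqE polyCD polyCM.
transitivity ('X^q * 'X + (a%:P * al%:P + ga%:P)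
              + 2%:R * (al%:P * 'X + a%:P * 'X^q + a%:P * al%:P)); first by ring.
by rewrite (pcharf0 pcharP2) mul0r addr0 exprSr.
Qed.

Lemma prod_XsubC_shift (R : comNzRingType) (s : seq R) a :
  \prod_(x <- s) ('X - (x + a)%:P) = (\prod_(x <- s) ('X - x%:P)) \Po ('X - a%:P).
Proof.
rewrite rmorph_prod /=; apply: eq_bigr => x _.
by rewrite comp_polyB comp_polyX comp_polyC polyCD opprD addrA addrAC.
Qed.

Theorem mainTheorem6 (l : nat) (hl : (1 <= l)%N)
  (F : finFieldType) (hF : #|F| = ((2 ^ l) ^ 2)%N)
  (L : fieldType) (iota : {rmorphism F -> L})
  (alpha beta : F)
  (s : seq L) (hs : size s = (2 ^ l).+1)
  (hsplit : map_poly iota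
              ('X ^+ (2 ^ l).+1 + (alpha ^+ (2 ^ l))%:P * 'X ^+ (2 ^ l)
               + alpha%:P * 'X + (beta + beta ^+ (2 ^ l))%:P)
            = \prod_(x <- s) ('X - x%:P))
  (hnt : ~ line_tangent_herm (2 ^ l) (iota alpha) (iota beta)) :
  (\matrix_(i < 2 ^ l, j < 2 ^ l) \sum_(x <- s) x ^+ (j * 2 ^ l + i))
  = map_mx iota (kchain (2 ^ l) alpha (beta + beta ^+ (2 ^ l)) l).
Proof.
set q := (2 ^ l)%N in hF hsplit *.
have pcharF2 : 2 \in [pchar F] by apply: (card_finPcharP (n := l * 2)); rewrite // hF expnM.
have pcharL2 : 2 \in [pchar L] := rmorph_pchar iota pcharF2.
set b := iota alpha; set g := iota (beta + beta ^+ q); set a := b ^+ q.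
have aqE : a ^+ q = b by rewrite -exprM /b -rmorphXn mulnn -hF expf_card.
set ys := [seq x + a | x <- s].
have prod_ys : \prod_(y <- ys) ('X - y%:P) = 'X^(q.+1) - (a * b + g)%:P.
  rewrite big_map prod_XsubC_shift -hsplit.
  by rewrite (map_herm_line_poly iota q alpha) herm_line_poly_shift.
have q_eq0 : q%:R = 0 :> L.
  by rewrite /q -(prednK hl) expnS natrM (pcharf0 pcharL2) mul0r.
apply/matrixP => i j; rewrite !mxE kchainE rmorph_kchain_coef -/b -/g.
have [P [mixedP evalP]] := shifted_power_expansion pcharL2 q b g (ltn_ord i) (ltn_ord j).
transitivity (kchain_coef q b g l i j *+ q.+1); last first.
  by rewrite mulrSr -mulr_natr q_eq0 mulr0 add0r.
rewrite -(psum_const_plus_mixed prod_ys mixedP) big_map; apply: eq_big_seq => x xs.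
rewrite -evalP; last exact: (root_XnsubC prod_ys (map_f _ xs)).
rewrite -/a -addrA addrr_pchar2 // addr0 exprD_pow2_pchar2 // aqE.
by rewrite -addrA addrr_pchar2 // addr0 exprD -exprM mulnC mulrC.
Qed.
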